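(* Let $q\in\mathbb{C}\setminus\{0\}$, $n\in\mathbb{Z}_{>0}$, and let $\alpha,\beta,f\in\mathbb{C}[x^{-1}][[x]]$ with $\alpha,\beta$ nonzero. Suppose $\alpha\,\sigma_qf+f=\beta$ and that $\beta_j\neq0$ for every integer $0<j\le n$, where $\beta_j=\sum_{k=0}^{j-1}(-\alpha\sigma_q)^k\beta$. Then $$L_n^{\alpha,\beta}(f^n)=(-1)^{n(n-1)/2},$$ where $$L_n^{\alpha,\beta}=\frac{1}{\beta_n}\left(\alpha\sigma_q+1\right)\frac{1}{\beta_{n-1}}\left(\alpha^2\sigma_q-1\right)\cdots\frac{1}{\beta_1}\left(\alpha^n\sigma_q-(-1)^n\right),$$ i.e. the composition, from left to right over $i=1,\dots,n$, of the factors $\frac{1}{\beta_{n+1-i}}\left(\alpha^{i}\sigma_q-(-1)^{i}\right)$.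
   Context: $\mathbb{C}[x^{-1}][[x]]$ is the field of formal Laurent series; $\sigma_qf(x)=f(qx)$; field elements act as multiplication operators and products of operators denote composition. *)

From HB Require Import structures.
From mathcomp Require Import all_boot all_order all_algebra.
From mathcomp Require Import complex Rstruct.
From Stdlib Require Import ClassicalEpsilon.
Set Implicit Arguments. Unset Strict Implicit. Unset Printing Implicit Defensive.
Import Order.TTheory GRing.Theory Num.Theory.
Local Open Scope ring_scope.

Notation C := (complex Rdefinitions.R).

(* A formal Laurent series sum_k a_k x^k is represented by its coefficient
   function a : int -> C; it is a Laurent series when its support is bounded below. *)
Definition series := int -> C.
Definition laurent (a : series) : Prop := exists N : int, forall k : int, k < N -> a k = 0.

(* a lower bound of the support (chosen classically; irrelevant for the values below) *)
Definition lowb (a : series) : int :=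
  epsilon (inhabits 0%R) (fun N : int => forall k : int, k < N -> a k = 0).

Definition szero : series := fun _ => 0.
Definition sconst (c : C) : series := fun k => if k == 0 then c else 0.
Definition sone : series := sconst 1.
Definition sadd (a b : series) : series := fun k => a k + b k.
Definition sopp (a : series) : series := fun k => - a k.
Definition ssub (a b : series) : series := fun k => a k - b k.
Definition sscale (c : C) (a : series) : series := fun k => c * a k.
Definition smul (a b : series) : series := fun k =>
  if (lowb a + lowb b <= k)%R then
    (\sum_(j < (absz (k - lowb a - lowb b)%R).+1) a (lowb a + j%:Z)%R * b (k - lowb a - j%:Z)%R)%R
  else 0.
Definition sexp (a : series) (n : nat) : series := iter n (smul a) sone.
Definition sinv (a : series) : series :=
  epsilon (inhabits szero) (fun b => laurent b /\ smul b a = sone).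

(* sigma_q f (x) = f (q x) : coefficient of x^k is multiplied by q^k *)
Definition sigma (q : C) (a : series) : series := fun k => q ^ k * a k.

Definition betaj (q : C) (alpha beta : series) (j : nat) : series :=
  fun m => \sum_(k < j) iter k (fun h => sopp (smul alpha (sigma q h))) beta m.

Definition Lfactor (q : C) (alpha beta : series) (n i : nat) (h : series) : series :=
  smul (sinv (betaj q alpha beta (n + 1 - i)))
       (ssub (smul (sexp alpha i) (sigma q h)) (sscale ((-1) ^+ i) h)).

Definition Lop (q : C) (alpha beta : series) (n : nat) (h : series) : series :=
  foldr (fun i acc => Lfactor q alpha beta n i acc) h (iota 1 n).

From HB Require Import structures.
From mathcomp Require Import all_boot all_order all_algebra complex Rstruct.
From mathcomp Require Import boolp.
From mathcomp Require Import zify ring.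
From Stdlib Require Import ClassicalEpsilon ProofIrrelevance Classical.
Set Implicit Arguments. Unset Strict Implicit. Unset Printing Implicit Defensive.
Import Order.TTheory GRing.Theory Num.Theory.
Local Open Scope ring_scope.

(* Write T = alpha sigma_q.  Since beta = T f + f, the sum beta_j telescopes to
   f - (-1)^j T^j f.  Let h_m(S) be the complete homogeneous symmetric polynomial
   of degree m in the entries of a list S, and V_k the list
   [T^k f; -T^(k-1) f; ...; (-1)^k f], so that f^n = h_n(V_0).  Homogeneity and
   the divided difference h_(m+1)(x,S) - h_(m+1)(y,S) = (x - y) h_m(x,y,S) show
   that, when k + m + 1 = n, the factor (1/beta_(k+1)) (alpha^(m+1) sigma_q -
   (-1)^(m+1)) maps h_(m+1)(V_k) to (-1)^k h_m(V_(k+1)).  The n factors of L_n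
   thus turn f^n into the sign (-1)^(0 + 1 + ... + (n-1)). *)

Section Convolution.
Variable R : comNzRingType.

Definition conv (p r : nat -> R) (m : nat) : R := \sum_(j < m.+1) p j * r (m - j)%N.

(* conv agrees with polynomial multiplication of the truncations; this transfers
   the ring laws of {poly R} to conv. *)
Lemma conv_truncation p r m K : (m < K)%N ->
  conv p r m = (\poly_(i < K) p i * \poly_(i < K) r i)`_m.
Proof.
move=> mK; rewrite coefM /conv; apply: eq_bigr => j _.
rewrite !coef_poly; have jm := ltn_ord j; rewrite ltnS in jm.
by rewrite (leq_ltn_trans jm mK) (leq_ltn_trans (leq_subr j m) mK).
Qed.

Lemma convC p r m : conv p r m = conv r p m.
Proof. by rewrite !(@conv_truncation _ _ m m.+1) // mulrC. Qed.

Lemma convA p r s m : conv (conv p r) s m = conv p (conv r s) m.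
Proof.
set P := \poly_(i < m.+1) p i; set Q := \poly_(i < m.+1) r i.
set S := \poly_(i < m.+1) s i.
transitivity ((P * Q * S)`_m).
  rewrite coefM /conv; apply: eq_bigr => j _.
  by rewrite [S`__]coef_poly ltnS leq_subr -(@conv_truncation _ _ _ m.+1).
rewrite -mulrA coefM /conv; apply: eq_bigr => j _.
rewrite coef_poly ltn_ord -(@conv_truncation _ _ _ m.+1) //.
exact: leq_ltn_trans (leq_subr _ _) _.
Qed.

Lemma convDl p p' r m : conv (fun i => p i + p' i) r m = conv p r m + conv p' r m.
Proof. by rewrite /conv -big_split; apply: eq_bigr => j _; rewrite mulrDl. Qed.

Lemma conv_const c (p r : nat -> R) m : (forall i, p i = if i == 0%N then c else 0) ->
  conv p r m = c * r m.
Proof.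
move=> pE; rewrite /conv big_ord_recl big1 ?addr0; first by rewrite pE subn0.
by move=> j _; rewrite pE /= mul0r.
Qed.
End Convolution.

Section PowerSeriesInverse.
Variables (F : fieldType) (p : nat -> F).

(* The coefficients of 1/p, computed by the usual recursion; rinv m i is
   the i-th coefficient as known at stage m. *)
Fixpoint rinv (m : nat) : nat -> F :=
  match m with
  | 0 => fun _ => (p 0)^-1
  | m'.+1 => fun i => if i == m'.+1 then
       - (p 0)^-1 * \sum_(j < m'.+1) p j.+1 * rinv m' (m' - j)%N
     else rinv m' i
  end.
Definition pinv (i : nat) : F := rinv i i.

Lemma rinv_stable m i : (i <= m)%N -> rinv m i = pinv i.
Proof.
rewrite /pinv; elim: m => [|m IH] im; first by move: im; rewrite leqn0 => /eqP ->.
by rewrite /=; case: eqP => [->|ne]; [rewrite /= eqxx | apply: IH; lia].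
Qed.

Hypothesis p0 : p 0 != 0.

Lemma pinvP m : conv pinv p m = (m == 0)%:R.
Proof.
rewrite convC; case: m => [|m]; first by rewrite /conv big_ord1 subnn /pinv /= mulfV.
rewrite /conv big_ord_recl subn0 /= /pinv /= eqxx mulrA mulrN mulfV // mulN1r.
apply/eqP; rewrite addrC subr_eq0; apply/eqP; apply: eq_bigr => j _.
by rewrite (_ : bump 0 j = j.+1) // subSS [in RHS]rinv_stable ?leq_subr.
Qed.
End PowerSeriesInverse.

Definition vanishes_below (a : series) (N : int) := forall k : int, k < N -> a k = 0.

Definition shift (a : series) (N : int) : nat -> C := fun i => a (N + i%:Z).

Definition cauchy (a b : series) (N M : int) (k : int) : C :=
  if N + M <= k then conv (shift a N) (shift b M) (absz (k - N - M)%R) else 0.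

Lemma smul_lowb a b : smul a b = cauchy a b (lowb a) (lowb b).
Proof.
apply/funext => k; rewrite /smul /cauchy; case: ifP => // H.
apply: eq_bigr => j _; rewrite /shift; congr (_ * b _).
have jm := ltn_ord j; rewrite ltnS in jm.
by rewrite -subzn // gez0_abs; [lia | lia].
Qed.

Lemma cauchyC a b N M : cauchy a b N M = cauchy b a M N.
Proof.
by apply/funext => k; rewrite /cauchy addrC convC (_ : k - N - M = k - M - N) //; ring.
Qed.

Lemma cauchy_lower1 a b N M : a (N - 1) = 0 -> cauchy a b (N - 1) M = cauchy a b N M.
Proof.
move=> a0; apply/funext => k; rewrite /cauchy.
case: (boolP (N + M <= k)) => H.
  rewrite (_ : N - 1 + M <= k); last by lia.
  rewrite (_ : absz (k - (N - 1) - M)%R = (absz (k - N - M)%R).+1); last by lia.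
  rewrite /conv big_ord_recl /shift addr0 a0 mul0r add0r.
  apply: eq_bigr => j _; rewrite subSS lift0; congr (a _ * _); move: (nat_of_ord j) => i; lia.
case: ifP => // H2; rewrite (_ : absz (k - (N - 1) - M)%R = 0%N); last by lia.
by rewrite /conv big_ord1 /shift addr0 a0 mul0r.
Qed.

Lemma cauchy_lower a b N M (d : nat) : vanishes_below a N ->
  cauchy a b (N - d%:Z) M = cauchy a b N M.
Proof.
move=> va; elim: d => [|d IH]; first by rewrite subr0.
rewrite -IH (_ : N - d.+1%:Z = N - d%:Z - 1); last by lia.
by apply: cauchy_lower1; apply: va; lia.
Qed.

Lemma cauchy_indepl a b N N' M : vanishes_below a N -> vanishes_below a N' ->
  cauchy a b N M = cauchy a b N' M.
Proof.
move=> va va'; have [le|lt] := lerP N N'.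
  by rewrite (_ : N = N' - (absz (N' - N))%R%:Z) ?cauchy_lower //; lia.
by rewrite [in RHS](_ : N' = N - (absz (N - N')%R)%:Z) ?cauchy_lower //; lia.
Qed.

Lemma lowbP a : laurent a -> vanishes_below a (lowb a).
Proof. by move=> la; rewrite /lowb; exact: (epsilon_spec (inhabits 0) _ la). Qed.

Lemma smul_cauchy a b N M : vanishes_below a N -> vanishes_below b M ->
  smul a b = cauchy a b N M.
Proof.
move=> va vb; have la : laurent a by exists N.
have lb : laurent b by exists M.
rewrite smul_lowb (cauchy_indepl _ _ (lowbP la) va) cauchyC.
by rewrite (cauchy_indepl _ _ (lowbP lb) vb) cauchyC.
Qed.

Lemma cauchy_vanishes a b N M : vanishes_below (cauchy a b N M) (N + M).
Proof. by move=> k kl; rewrite /cauchy; case: ifP => //; lia. Qed.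

Lemma shift_cauchy a b N M : shift (cauchy a b N M) (N + M) = conv (shift a N) (shift b M).
Proof.
apply/funext => i; rewrite /shift /cauchy (_ : N + M <= N + M + i%:Z); last by lia.
by congr conv; lia.
Qed.

Lemma vanishes_below_le a N M : vanishes_below a N -> M <= N -> vanishes_below a M.
Proof. by move=> v le k kM; apply: v; exact: lt_le_trans kM le. Qed.

Lemma sconst_vanishes c : vanishes_below (sconst c) 0.
Proof. by move=> k k0; rewrite /sconst; case: eqP => // e; move: k0; rewrite e ltxx. Qed.

Lemma smul_sconst c a : laurent a -> smul (sconst c) a = sscale c a.
Proof.
move=> [N va]; rewrite (smul_cauchy (sconst_vanishes c) va); apply/funext => k.
rewrite /cauchy add0r (@conv_const _ c); last by move=> i; rewrite /shift add0r.
rewrite /shift /sscale; case: ifP => H; last by rewrite va ?mulr0 //; lia.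
by congr (_ * a _); lia.
Qed.

Lemma smulA a b c : laurent a -> laurent b -> laurent c ->
  smul (smul a b) c = smul a (smul b c).
Proof.
move=> [N va] [M vb] [P vc].
rewrite (smul_cauchy va vb) (smul_cauchy vb vc).
rewrite (smul_cauchy (@cauchy_vanishes a b N M) vc) (smul_cauchy va (@cauchy_vanishes b c M P)).
apply/funext => k; rewrite /cauchy !shift_cauchy convA addrA.
by case: ifP => // _; congr conv; congr absz; ring.
Qed.

Lemma smulC a b : smul a b = smul b a.
Proof. by rewrite !smul_lowb cauchyC. Qed.

Lemma smulDl a b c : laurent a -> laurent b -> laurent c ->
  smul (sadd a b) c = sadd (smul a c) (smul b c).
Proof.
move=> [N va] [M vb] [P vc]; set L := Num.min N M.
have vaL : vanishes_below a L by apply: (vanishes_below_le va); rewrite ge_min lexx.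
have vbL : vanishes_below b L by apply: (vanishes_below_le vb); rewrite ge_min lexx orbT.
have vabL : vanishes_below (sadd a b) L by move=> k kl; rewrite /sadd vaL ?vbL ?addr0.
rewrite (smul_cauchy vabL vc) (smul_cauchy vaL vc) (smul_cauchy vbL vc).
apply/funext => k; rewrite /cauchy /sadd; case: ifP => _; last by rewrite addr0.
by rewrite -convDl.
Qed.

Lemma laurent_szero : laurent szero.
Proof. by exists 0. Qed.

Lemma laurent_sconst c : laurent (sconst c).
Proof. by exists 0; apply: sconst_vanishes. Qed.

Lemma laurent_sadd a b : laurent a -> laurent b -> laurent (sadd a b).
Proof.
move=> [N va] [M vb]; exists (Num.min N M) => k kl; rewrite /sadd va ?vb ?addr0 //.
  by apply: lt_le_trans kl _; rewrite ge_min lexx orbT.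
by apply: lt_le_trans kl _; rewrite ge_min lexx.
Qed.

Lemma laurent_sopp a : laurent a -> laurent (sopp a).
Proof. by move=> [N va]; exists N => k kl; rewrite /sopp va ?oppr0. Qed.

Lemma laurent_smul a b : laurent (smul a b).
Proof. by exists (lowb a + lowb b); rewrite smul_lowb; apply: cauchy_vanishes. Qed.

Lemma smul1 a : laurent a -> smul sone a = a.
Proof. by move=> la; rewrite smul_sconst //; apply/funext => k; rewrite /sscale mul1r. Qed.

Record lseries := LSeries { lsval : series; lsvalP : laurent lsval }.
HB.instance Definition _ := gen_eqMixin lseries.
HB.instance Definition _ := gen_choiceMixin lseries.

Lemma lsval_inj (a b : lseries) : lsval a = lsval b -> a = b.
Proof.
case: a b => [a pa] [b pb] /= e; subst b.
by rewrite (proof_irrelevance _ pa pb).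
Qed.

(* Reading a series as an element of the ring (an arbitrary one if it is not Laurent). *)
Definition to_lseries (a : series) : lseries :=
  match excluded_middle_informative (laurent a) with
  | left p => LSeries p
  | right _ => LSeries laurent_szero
  end.

Lemma to_lseriesK a : laurent a -> lsval (to_lseries a) = a.
Proof. by rewrite /to_lseries; case: excluded_middle_informative. Qed.

Definition ls_zero := LSeries laurent_szero.
Definition ls_opp (a : lseries) := LSeries (laurent_sopp (lsvalP a)).
Definition ls_add (a b : lseries) := LSeries (laurent_sadd (lsvalP a) (lsvalP b)).

Lemma ls_addA : associative ls_add.
Proof. by move=> a b c; apply: lsval_inj; apply/funext => k; rewrite /= /sadd addrA. Qed.
Lemma ls_addC : commutative ls_add.
Proof. by move=> a b; apply: lsval_inj; apply/funext => k; rewrite /= /sadd addrC. Qed.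
Lemma ls_add0 : left_id ls_zero ls_add.
Proof. by move=> a; apply: lsval_inj; apply/funext => k; rewrite /= /sadd /szero add0r. Qed.
Lemma ls_addN : left_inverse ls_zero ls_opp ls_add.
Proof. by move=> a; apply: lsval_inj; apply/funext => k; rewrite /= /sadd /sopp /szero addNr. Qed.

HB.instance Definition _ := GRing.isZmodule.Build lseries ls_addA ls_addC ls_add0 ls_addN.

Definition ls_one := LSeries (laurent_sconst 1).
Definition ls_mul (a b : lseries) := LSeries (laurent_smul (lsval a) (lsval b)).

Lemma ls_mulA : associative ls_mul.
Proof. by move=> a b c; apply: lsval_inj; rewrite /= smulA //; apply: lsvalP. Qed.
Lemma ls_mulC : commutative ls_mul.
Proof. by move=> a b; apply: lsval_inj; rewrite /= smulC. Qed.
Lemma ls_mul1 : left_id ls_one ls_mul.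
Proof. by move=> a; apply: lsval_inj; rewrite /= smul1 //; apply: lsvalP. Qed.
Lemma ls_mulDl : left_distributive ls_mul ls_add.
Proof. by move=> a b c; apply: lsval_inj; rewrite /= smulDl //; apply: lsvalP. Qed.
Lemma ls_one_neq0 : ls_one != ls_zero.
Proof.
apply/eqP => /(congr1 lsval) /= /(congr1 (fun f => f 0)).
by rewrite /sconst /szero eqxx => /eqP; rewrite oner_eq0.
Qed.

HB.instance Definition _ :=
  GRing.Zmodule_isComNzRing.Build lseries ls_mulA ls_mulC ls_mul1 ls_mulDl ls_one_neq0.

Lemma lsval_add (a b : lseries) : lsval (a + b) = sadd (lsval a) (lsval b). Proof. by []. Qed.
Lemma lsval_opp (a : lseries) : lsval (- a) = sopp (lsval a). Proof. by []. Qed.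
Lemma lsval_mul (a b : lseries) : lsval (a * b) = smul (lsval a) (lsval b). Proof. by []. Qed.
Lemma lsval_one : lsval (1 : lseries) = sone. Proof. by []. Qed.

Lemma lsval_exp (a : lseries) i : lsval (a ^+ i) = sexp (lsval a) i.
Proof. by elim: i => [//|i IH]; rewrite exprS lsval_mul IH. Qed.

Lemma lsval_sign i : lsval ((-1) ^+ i : lseries) = sconst ((-1) ^+ i).
Proof.
elim: i => [//|i IH]; rewrite exprS lsval_mul IH lsval_opp lsval_one.
have -> : sopp sone = sconst (-1).
  by apply/funext => k; rewrite /sopp /sone /sconst; case: ifP; rewrite ?oppr0.
rewrite smul_sconst; last exact: laurent_sconst.
by apply/funext => k; rewrite /sscale /sconst; case: ifP; rewrite ?mulr0 // exprS.
Qed.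

Lemma lsval_sum (G : nat -> lseries) j m :
  lsval (\sum_(k < j) G k) m = \sum_(k < j) lsval (G k) m.
Proof. by elim: j => [|j IH]; rewrite ?big_ord0 // !big_ord_recr /= -IH. Qed.

Section Dilation.
Variables (q : C).
Hypothesis q_neq0 : q != 0.

Lemma sigma_vanishes a N : vanishes_below a N -> vanishes_below (sigma q a) N.
Proof. by move=> va k kl; rewrite /sigma va ?mulr0. Qed.

Lemma laurent_sigma a : laurent a -> laurent (sigma q a).
Proof. by move=> [N va]; exists N; apply: sigma_vanishes. Qed.

Lemma sigma_add a b : sigma q (sadd a b) = sadd (sigma q a) (sigma q b).
Proof. by apply/funext => k; rewrite /sigma /sadd mulrDr. Qed.

Lemma sigma_one : sigma q sone = sone.
Proof.
apply/funext => k; rewrite /sigma /sone /sconst.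
by case: eqP => [->|_]; rewrite ?expr0z ?mulr1 ?mulr0.
Qed.

(* sigma_q is multiplicative since q^j q^(k-j) = q^k (this needs q != 0). *)
Lemma sigma_mul a b : laurent a -> laurent b ->
  sigma q (smul a b) = smul (sigma q a) (sigma q b).
Proof.
move=> [N va] [M vb].
rewrite (smul_cauchy va vb) (smul_cauchy (sigma_vanishes va) (sigma_vanishes vb)).
apply/funext => k; rewrite /sigma /cauchy; case: ifP => H; last by rewrite mulr0.
rewrite /conv mulr_sumr; apply: eq_bigr => j _; rewrite /shift.
have jm := ltn_ord j; rewrite ltnS in jm.
by rewrite mulrACA -expfzDr //; congr (q ^ _ * _); lia.
Qed.

Definition ls_sigma (a : lseries) : lseries := to_lseries (sigma q (lsval a)).

Lemma lsval_sigma a : lsval (ls_sigma a) = sigma q (lsval a).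
Proof. by rewrite to_lseriesK //; apply: laurent_sigma; apply: lsvalP. Qed.

Lemma ls_sigmaD a b : ls_sigma (a + b) = ls_sigma a + ls_sigma b.
Proof. by apply: lsval_inj; rewrite lsval_add !lsval_sigma lsval_add sigma_add. Qed.
Lemma ls_sigmaM a b : ls_sigma (a * b) = ls_sigma a * ls_sigma b.
Proof. by apply: lsval_inj; rewrite lsval_mul !lsval_sigma lsval_mul sigma_mul //; apply: lsvalP. Qed.
Lemma ls_sigma1 : ls_sigma 1 = 1.
Proof. by apply: lsval_inj; rewrite lsval_sigma lsval_one sigma_one. Qed.
End Dilation.

Lemma valuation_exists b : laurent b -> b <> szero ->
  exists v, vanishes_below b v /\ b v != 0.
Proof.
move=> [N vbN] bnz.
have [k bk] : exists k, b k != 0.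
  apply: NNPP => H; apply: bnz; apply/funext => k; rewrite /szero.
  by case: (b k =P 0) => // /eqP bk; exfalso; apply: H; exists k.
have kN : N <= k by case: (lerP N k) => // kl; move: bk; rewrite vbN ?eqxx.
have exP : exists i : nat, b (N + i%:Z) != 0.
  by exists (absz (k - N)%R); rewrite (_ : N + (absz (k - N)%R)%:Z = k) //; lia.
case: (ex_minnP exP) => i0 Pi0 mini0; exists (N + i0%:Z); split => // k' kl.
case: (lerP N k') => kN'; last exact: vbN.
apply/eqP; apply: contraT => bk'.
have : (i0 <= absz (k' - N)%R)%N.
  by apply: mini0; rewrite (_ : N + (absz (k' - N)%R)%:Z = k') //; lia.
lia.
Qed.

(* Nonzero Laurent series are invertible: x^(-v) times the power-series
   inverse of x^(-v) b. *)
Lemma inverse_exists b : laurent b -> b <> szero ->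
  exists c, laurent c /\ smul c b = sone.
Proof.
move=> lb bnz; have [v [vbv bv]] := valuation_exists lb bnz.
set c : series := fun k => if - v <= k then pinv (shift b v) (absz (k + v)%R) else 0.
have vc : vanishes_below c (- v) by move=> k kl; rewrite /c; case: ifP => //; lia.
have shift_c : shift c (- v) = pinv (shift b v).
  apply/funext => i; rewrite /shift /c (_ : - v <= - v + i%:Z); last by lia.
  by congr pinv; lia.
exists c; split; first by exists (- v).
rewrite (smul_cauchy vc vbv); apply/funext => k; rewrite /cauchy shift_c addNr.
have b0 : shift b v 0 != 0 by rewrite /shift addr0.
rewrite /sone /sconst; case: ifP => k0; last by case: eqP => // e; move: k0; rewrite e lexx.
rewrite pinvP // (_ : k - - v - v = k); last by ring.
have -> : (absz k == 0)%N = (k == 0) by apply/idP/idP => /eqP e; apply/eqP; lia.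
by case: (k == 0).
Qed.

Lemma sinvP b : laurent b -> b <> szero -> laurent (sinv b) /\ smul (sinv b) b = sone.
Proof. by move=> lb bz; exact: (epsilon_spec _ _ (inverse_exists lb bz)). Qed.

Section CompleteHomogeneous.
Variable R : comNzRingType.

(* hcomp S m is the complete homogeneous symmetric polynomial h_m evaluated
   at the entries of S, via h_m(x, S) = h_m(S) + x h_(m-1)(x, S). *)
Fixpoint hcomp (S : seq R) : nat -> R :=
  match S with
  | [::] => fun m => (m == 0)%:R
  | x :: S' => fix hx m := match m with 0 => 1 | m'.+1 => hcomp S' m'.+1 + x * hx m' end
  end.

Lemma hcomp_cons0 x S : hcomp (x :: S) 0 = 1. Proof. by []. Qed.
Lemma hcomp_consS x S m : hcomp (x :: S) m.+1 = hcomp S m.+1 + x * hcomp (x :: S) m.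
Proof. by []. Qed.

Lemma hcomp0 S : hcomp S 0 = 1. Proof. by case: S. Qed.

Lemma hcomp_single x m : hcomp [:: x] m = x ^+ m.
Proof. by elim: m => [//|m IH]; rewrite hcomp_consS IH exprS /= add0r. Qed.

Lemma hcomp_congr x S S' : (forall m, hcomp S m = hcomp S' m) ->
  forall m, hcomp (x :: S) m = hcomp (x :: S') m.
Proof. by move=> e; elim=> [//|m IH]; rewrite !hcomp_consS IH e. Qed.

(* Symmetry under exchanging the first two variables, proved for degrees m and
   m+1 simultaneously. *)
Lemma hcomp_swap x y S m : hcomp [:: x, y & S] m = hcomp [:: y, x & S] m.
Proof.
suff [] : hcomp [:: x, y & S] m = hcomp [:: y, x & S] m /\
          hcomp [:: x, y & S] m.+1 = hcomp [:: y, x & S] m.+1 by [].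
elim: m => [|m [IH1 IH2]]; first by split=> //; rewrite !hcomp_consS !hcomp_cons0; ring.
split=> //; set hxy := hcomp [:: x, y & S].
have ey : hcomp (y :: S) m.+1 = hxy m.+1 - x * hxy m by rewrite /hxy [hcomp [:: x, y & S] _]hcomp_consS; ring.
have ex : hcomp (x :: S) m.+1 = hxy m.+1 - y * hxy m.
  by rewrite /hxy IH2 IH1 [hcomp [:: y, x & S] _]hcomp_consS; ring.
rewrite /hxy [LHS]hcomp_consS [RHS]hcomp_consS [hcomp (y :: S) m.+2]hcomp_consS.
by rewrite [hcomp (x :: S) m.+2]hcomp_consS -IH2 -/hxy ey ex; ring.
Qed.

Lemma hcomp_rcons U e m : hcomp (rcons U e) m = hcomp (e :: U) m.
Proof.
elim: U m => [//|u U IH] m.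
by rewrite rcons_cons hcomp_swap; apply: hcomp_congr.
Qed.

Lemma hcomp_divided_difference x y S m :
  hcomp (x :: S) m.+1 - hcomp (y :: S) m.+1 = (x - y) * hcomp [:: x, y & S] m.
Proof.
elim: m => [|m IH]; first by rewrite !hcomp_consS !hcomp_cons0; ring.
rewrite [hcomp [:: x, y & S] m.+1]hcomp_consS mulrDr (mulrCA (x - y) x) -IH.
rewrite [hcomp (x :: S) m.+2]hcomp_consS [hcomp (y :: S) m.+2]hcomp_consS.
by rewrite [hcomp (y :: S) m.+1]hcomp_consS; ring.
Qed.

Lemma hcomp_scale (c : R) S m : c ^+ m * hcomp S m = hcomp (map (fun v => c * v) S) m.
Proof.
elim: S m => [|x S IH] m; first by case: m => [|m] /=; rewrite ?mulr1 ?mulr0.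
elim: m => [|m IHm]; first by rewrite /= expr0 mulr1.
by rewrite map_cons !hcomp_consS -IH -IHm !exprS; ring.
Qed.

Lemma hcomp_rmorph (phi : {rmorphism R -> R}) S m : phi (hcomp S m) = hcomp (map phi S) m.
Proof.
elim: S m => [|x S IH] m; first by case: m => [|m] /=; rewrite ?rmorph1 ?rmorph0.
by elim: m => [|m IHm]; rewrite ?rmorph1 // map_cons !hcomp_consS rmorphD rmorphM IH IHm.
Qed.
End CompleteHomogeneous.

Section AbstractIdentity.
(* The identity holds in any commutative ring R with a ring endomorphism s
   (standing for sigma_q) and an operator tw = alpha s. *)
Variables (R : comNzRingType) (s : {rmorphism R -> R}) (alpha beta f : R).
Variables (inv : nat -> R) (n : nat).

Definition tw (x : R) : R := alpha * s x.

Lemma twD x y : tw (x + y) = tw x + tw y. Proof. by rewrite /tw rmorphD mulrDr. Qed.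
Lemma twN x : tw (- x) = - tw x. Proof. by rewrite /tw rmorphN mulrN. Qed.

Lemma iter_twD k x y : iter k tw (x + y) = iter k tw x + iter k tw y.
Proof. by elim: k => [//|k IH]; rewrite !iterS IH twD. Qed.

Lemma iter_neg_tw k x : iter k (fun h => - tw h) x = (-1) ^+ k * iter k tw x.
Proof.
elim: k => [|k IH]; first by rewrite mul1r.
by rewrite !iterS IH /tw rmorphM rmorph_sign exprS; ring.
Qed.

Definition bseq (j : nat) : R := \sum_(k < j) iter k (fun h => - tw h) beta.

Hypothesis f_eq : tw f + f = beta.

(* The sum telescopes: beta_j = f - (-1)^j tw^j f. *)
Lemma bseqE j : bseq j = f - (-1) ^+ j * iter j tw f.
Proof.
elim: j => [|j IH]; first by rewrite /bseq big_ord0 /= mul1r subrr.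
rewrite /bseq big_ord_recr /= -/(bseq j) IH iter_neg_tw -f_eq iter_twD -iterSr.
by rewrite iterS exprS; ring.
Qed.

(* The variables after k steps: vars k = [tw^k f; -tw^(k-1) f; ...; (-1)^k f]. *)
Fixpoint vars (k : nat) : seq R :=
  if k is k'.+1 then iter k tw f :: map -%R (vars k') else [:: f].

Lemma vars_shift k : exists U,
  map tw (vars k) = iter k.+1 tw f :: U /\ map -%R (vars k) = rcons U ((-1) ^+ k.+1 * f).
Proof.
elim: k => [|k [U [eT eN]]]; first by exists [::]; rewrite /= expr1 mulN1r.
exists (rcons (map tw U) (tw ((-1) ^+ k.+1 * f))); split.
  by rewrite [vars _]/= map_cons eN map_rcons.
have eNT : map -%R (map tw (vars k)) = map tw (map -%R (vars k)).
  by rewrite -!map_comp; apply: eq_map => x /=; rewrite twN.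
move: eNT; rewrite eT eN map_rcons /= => eNT.
rewrite [vars _]/= eN map_rcons -rcons_cons eNT; congr rcons.
by rewrite [in RHS]exprS mulN1r mulNr.
Qed.

Lemma sign_sqr k : (-1) ^+ k * (-1) ^+ k = 1 :> R.
Proof. by rewrite -exprD addnn -mul2n exprM sqrrN expr1n expr1n. Qed.

Definition factor (i : nat) (x : R) : R :=
  inv (n + 1 - i) * (alpha ^+ i * s x - (-1) ^+ i * x).

Hypothesis inv_bseq : forall j, (0 < j <= n)%N -> inv j * bseq j = 1.

Lemma factor_step k m e : (k + m.+1 = n)%N ->
  factor m.+1 ((-1) ^+ e * hcomp (vars k) m.+1) = (-1) ^+ (e + k) * hcomp (vars k.+1) m.
Proof.
move=> km; rewrite /factor (_ : (n + 1 - m.+1 = k.+1)%N); last by lia.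
rewrite rmorphM rmorph_sign hcomp_rmorph.
have -> : alpha ^+ m.+1 * ((-1) ^+ e * hcomp (map s (vars k)) m.+1) -
          (-1) ^+ m.+1 * ((-1) ^+ e * hcomp (vars k) m.+1) =
          (-1) ^+ e * (alpha ^+ m.+1 * hcomp (map s (vars k)) m.+1 -
                       (-1) ^+ m.+1 * hcomp (vars k) m.+1) by ring.
rewrite !hcomp_scale -map_comp (_ : map (_ \o s) _ = map tw (vars k)) //.
have -> : map (fun v => -1 * v) (vars k) = map -%R (vars k).
  by apply: eq_map => x; rewrite mulN1r.
have [U [eT eN]] := vars_shift k.
rewrite eT eN hcomp_rcons hcomp_divided_difference.
have -> : hcomp (vars k.+1) m = hcomp [:: iter k.+1 tw f, (-1) ^+ k.+1 * f & U] m.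
  by rewrite [vars _]/= eN; apply: hcomp_congr => j; rewrite hcomp_rcons.
have -> : iter k.+1 tw f - (-1) ^+ k.+1 * f = (-1) ^+ k * bseq k.+1.
  by rewrite bseqE exprS !mulN1r !mulNr !opprK mulrDr mulrA sign_sqr mul1r addrC.
transitivity ((-1) ^+ (e + k) * (inv k.+1 * bseq k.+1) *
               hcomp [:: iter k.+1 tw f, (-1) ^+ k.+1 * f & U] m).
  by rewrite exprD; ring.
by rewrite inv_bseq ?mulr1 //; lia.
Qed.

Lemma factors_tail m : forall k e, (k + m = n)%N ->
  foldr factor ((-1) ^+ e * hcomp (vars k) m) (iota 1 m) = (-1) ^+ (e + \sum_(k <= t < n) t).
Proof.
elim: m => [|m IH] k e km.
  by rewrite hcomp0 big_geq ?addn0 ?mulr1 //; lia.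
rewrite -addn1 iotaD foldr_cat /= add1n addn1 factor_step; last by lia.
rewrite IH; last by lia.
by rewrite (@big_ltn _ _ _ k n) ?addnA //; lia.
Qed.

Theorem abstract_identity :
  foldr factor (f ^+ n) (iota 1 n) = (-1) ^+ ((n * n.-1) %/ 2).
Proof.
have := @factors_tail n 0 0 erefl.
by rewrite expr0 mul1r add0n hcomp_single => ->; rewrite bin2_sum bin2 divn2.
Qed.
End AbstractIdentity.

Section Transfer.
Variables (q : C) (alpha beta : series) (n : nat).
Hypotheses (q_neq0 : q != 0) (la : laurent alpha) (lb : laurent beta).
Hypothesis betaj_neq0 : forall j, (0 < j <= n)%N -> betaj q alpha beta j <> szero.

Lemma ls_sigma_nmod : nmod_morphism (ls_sigma q).
Proof.
split; last exact: ls_sigmaD.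
by apply: lsval_inj; rewrite lsval_sigma; apply/funext => k; rewrite /sigma /= /szero mulr0.
Qed.

HB.instance Definition _ := GRing.isNmodMorphism.Build lseries lseries (ls_sigma q) ls_sigma_nmod.
HB.instance Definition _ := GRing.isMonoidMorphism.Build lseries lseries (ls_sigma q)
  (ls_sigma1 q, ls_sigmaM q_neq0).

Let A := to_lseries alpha.
Let s : {rmorphism lseries -> lseries} := ls_sigma q.

Definition ls_inv (j : nat) : lseries := to_lseries (sinv (betaj q alpha beta j)).

Lemma lsval_iter_neg_tw k : lsval (iter k (fun h => - tw s A h) (to_lseries beta)) =
  iter k (fun h => sopp (smul alpha (sigma q h))) beta.
Proof.
elim: k => [|k IH]; first by rewrite /= to_lseriesK.
by rewrite !iterS lsval_opp lsval_mul lsval_sigma IH /A to_lseriesK.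
Qed.

Lemma lsval_bseq j : lsval (bseq s A (to_lseries beta) j) = betaj q alpha beta j.
Proof.
by apply/funext => m; rewrite lsval_sum; apply: eq_bigr => k _; rewrite lsval_iter_neg_tw.
Qed.

Lemma laurent_betaj j : laurent (betaj q alpha beta j).
Proof. by rewrite -lsval_bseq; apply: lsvalP. Qed.

Lemma ls_invP j : (0 < j <= n)%N -> ls_inv j * bseq s A (to_lseries beta) j = 1.
Proof.
move=> hj; have [linv invP] := sinvP (laurent_betaj j) (betaj_neq0 hj).
by apply: lsval_inj; rewrite lsval_mul lsval_bseq /ls_inv to_lseriesK.
Qed.

Lemma lsval_factor i x : (0 < i <= n)%N ->
  lsval (factor s A ls_inv n i x) = Lfactor q alpha beta n i (lsval x).
Proof.
move=> hi; have hj : (0 < n + 1 - i <= n)%N by lia.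
have [linv _] := sinvP (laurent_betaj (n + 1 - i)) (betaj_neq0 hj).
rewrite /factor /Lfactor lsval_mul lsval_add lsval_opp !lsval_mul lsval_exp lsval_sigma.
rewrite lsval_sign smul_sconst; last exact: lsvalP.
by rewrite /ls_inv /A !to_lseriesK.
Qed.

Lemma lsval_factors (l : seq nat) x : all (fun i => 0 < i <= n)%N l ->
  lsval (foldr (factor s A ls_inv n) x l) =
  foldr (fun i acc => Lfactor q alpha beta n i acc) (lsval x) l.
Proof.
elim: l => [//|i l IH] /andP [hi hl].
by rewrite -[LHS]/(lsval (factor s A ls_inv n i _)) lsval_factor // IH.
Qed.

Lemma Lop_transfer f : laurent f -> sadd (smul alpha (sigma q f)) f = beta ->
  Lop q alpha beta n (sexp f n) = sconst ((-1) ^+ ((n * n.-1) %/ 2)).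
Proof.
move=> lf f_eq; have hall : all (fun i => 0 < i <= n)%N (iota 1 n).
  by apply/allP => i; rewrite mem_iota => /andP [h1 h2]; apply/andP; split; lia.
rewrite -(to_lseriesK lf) -lsval_exp /Lop -lsval_factors // -lsval_sign.
congr lsval; apply: (abstract_identity (beta := to_lseries beta)); last exact: ls_invP.
by apply: lsval_inj; rewrite lsval_add lsval_mul lsval_sigma /A !to_lseriesK.
Qed.
End Transfer.

Unset Implicit Arguments.
Theorem theorem2 (q : C) (n : nat) (alpha beta f : series) :
  q != 0 -> (0 < n)%N ->
  laurent alpha -> laurent beta -> laurent f ->
  alpha <> szero -> beta <> szero ->
  sadd (smul alpha (sigma q f)) f = beta ->
  (forall j : nat, (0 < j <= n)%N -> betaj q alpha beta j <> szero) ->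
  Lop q alpha beta n (sexp f n) = sconst ((-1) ^+ ((n * n.-1) %/ 2)).
Proof.
move=> q_neq0 _ la lb lf _ _ f_eq betaj_neq0.
exact: (Lop_transfer q_neq0 la lb betaj_neq0 lf f_eq).
Qed.
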